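(* Let $(G;+,\cdot)$ be a nonassociative right semiring, $n \geq 4$, and let $f, g \colon G^n \to G$ be affine functions over $(G;+,\cdot)$. If $f$ and $g$ are both linear, or if $(G;+,\cdot)$ is cancellative, then $\operatorname{deck} f = \operatorname{deck} g$ if and only if $f \equiv g$. In particular, the class of linear functions of arity at least $4$ over any nonassociative right semiring is weakly reconstructible, and if the semiring is cancellative, the class of affine functions of arity at least $4$ over it is weakly reconstructible.
   Context: A nonassociative right semiring is an algebra $(G;+,\cdot)$ such that $(G;+)$ is a commutative monoid with neutral element $0$; $(G;\cdot)$ is a groupoid (not necessarily associative) with right identity $1$; $(a+b)c = ac+bc$; and $a\cdot 0 = 0$. It is cancellative if $a+b=a+c$ implies $b=c$. A function $f\colon G^n\to G$ is affine if $f(x_1,\dots,x_n) = a_1x_1+\dots+a_nx_n+c$ for some $a_i,c\in G$; linear if this holds with $c=0$. Identification minor: for $f\colon A^n\to B$ and $I=\{i,j\}$, $i<j$, $f_I\colon A^{n-1}\to B$ is $f_I(x_1,\dots,x_{n-1}) = f(x_1,\dots,x_{j-1},x_i,x_j,\dots,x_{n-1})$. Two functions $f,g\colon A^n\to B$ are equivalent, $f\equiv g$, if $f(x_1,\dots,x_n) = g(x_{\sigma(1)},\dots,x_{\sigma(n)})$ for some permutation $\sigma$ of $\{1,\dots,n\}$. The deck of $f$ is the multiset $\langle f_I/{\equiv} : I \in \binom{[n]}{2}\rangle$ of equivalence classes of its $\binom n2$ identification minors. A class $\mathcal{C}$ of functions is weakly reconstructible if for every $f\in\mathcal{C}$, every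 $g \in \mathcal{C}$ of the same arity with $\operatorname{deck} g = \operatorname{deck} f$ satisfies $g \equiv f$. *)

From HB Require Import structures.
From mathcomp Require Import all_boot all_fingroup.
Set Implicit Arguments. Unset Strict Implicit. Unset Printing Implicit Defensive.

Record nrsemiring := NRSemiring {
  carrier :> Type;
  add : carrier -> carrier -> carrier;
  mul : carrier -> carrier -> carrier;
  zero : carrier;
  one : carrier;
  addA : forall a b c, add a (add b c) = add (add a b) c;
  addC : forall a b, add a b = add b a;
  add0r : forall a, add zero a = a;
  mulr1 : forall a, mul a one = a;
  mulDl : forall a b c, mul (add a b) c = add (mul a c) (mul b c);
  mulr0 : forall a, mul a zero = zero
}.

Section Defs.
Variable G : nrsemiring.

Definition cancellative : Prop :=
  forall a b c : G, add a b = add a c -> b = c.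

Definition Fn (n : nat) := ('I_n -> G) -> G.

Definition affine n (f : Fn n) : Prop :=
  exists (a : 'I_n -> G) (c : G),
    forall x, f x = add (\big[@add G/zero G]_(i < n) mul (a i) (x i)) c.

Definition linear n (f : Fn n) : Prop :=
  exists (a : 'I_n -> G),
    forall x, f x = add (\big[@add G/zero G]_(i < n) mul (a i) (x i)) (zero G).

Definition fequiv n (f g : Fn n) : Prop :=
  exists s : 'S_n, forall x : 'I_n -> G, f x = g (fun k => x (s k)).

(* 2-element subsets {i,j} of [n], represented as pairs with i < j *)
Definition pair_t n := {p : 'I_n * 'I_n | p.1 < p.2}.

(* reading of an (m)-tuple at a natural index (default 0 out of range;
   never used out of range for valid pairs) *)
Definition at_nat m (x : 'I_m -> G) (k : nat) : G :=
  match (insub k : option 'I_m) with Some o => x o | None => zero G end.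

(* identification minor f_I, I = {i,j}, i < j (0-indexed):
   f_I(x_0..x_{n-2}) = f(x_0,..,x_{j-1}, x_i, x_j,..,x_{n-2}) *)
Definition minor n (f : Fn n) (I : pair_t n) : Fn n.-1 :=
  fun x => let i := (val I).1 in let j := (val I).2 in
    f (fun k : 'I_n =>
         at_nat x (if k < j then nat_of_ord k
                   else if nat_of_ord k == nat_of_ord j then nat_of_ord i
                   else (nat_of_ord k).-1)).

(* deck f = deck g as multisets of ≡-classes: a bijection between the
   index sets of minors matching minors up to ≡ *)
Definition deck_eq n (f g : Fn n) : Prop :=
  exists s : {perm pair_t n}, forall I, fequiv (minor f I) (minor g (s I)).

Definition weakly_reconstructible (C : forall n, Fn n -> Prop) : Prop :=
  forall n (f g : Fn n), C n f -> C n g -> deck_eq g f -> fequiv g f.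

Definition linear_class_ge4 : forall n, Fn n -> Prop :=
  fun n f => 4 <= n /\ linear f.
Definition affine_class_ge4 : forall n, Fn n -> Prop :=
  fun n f => 4 <= n /\ affine f.

End Defs.

From HB Require Import structures.
From Pilot Require Import Defs.
From mathcomp Require Import all_boot all_fingroup.
From Stdlib Require Import ClassicalEpsilon Lia.
From mathcomp Require Import zify.
Set Implicit Arguments. Unset Strict Implicit. Unset Printing Implicit Defensive.

(* Write f = a_1 x_1 + ... + a_n x_n + c.  When the pair (a, c) is uniquely
   determined by f (c = 0, or cancellation), f ≡ g holds iff the coefficient
   multisets agree and the constants agree.  The minor f_I, I = {i, j}, has
   coefficient multiset {a_k | k <> j} with a_i replaced by a_i + a_j.  Hence
   deck f determines the constant, the total sum a_1 + ... + a_n, and, for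
   every value x, the weight  K * #{k | a_k = x} + #{i < j | a_i + a_j = x}
   with K = C(n-1, 2).  The combinatorial heart (section PairSums, over any
   commutative monoid) shows that for n >= 4 these data determine the
   multiset: writing the two multisets as R + U and R + V with U, V disjoint,
   counting forces U = {u}, V = {v}, n = 4 and r + v = u, r + u = v for all
   three r in R, which makes the total sums equal to v and u, contradiction. *)

(* Equality on the carrier is decided classically, so that multiplicities of
   coefficients can be counted. *)
Definition classic_eqb (A : Type) (x y : A) : bool :=
  if excluded_middle_informative (x = y) then true else false.

Lemma classic_eqbP (A : Type) : Equality.axiom (@classic_eqb A).
Proof.
by move=> x y; rewrite /classic_eqb; case: excluded_middle_informative; constructor.
Qed.

HB.instance Definition _ (G : nrsemiring) :=
  hasDecEq.Build (carrier G) (@classic_eqbP G).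

Lemma nrsemiring_addA (G : nrsemiring) : associative (@add G).
Proof. by move=> a b c; rewrite addA. Qed.

Lemma nrsemiring_addC (G : nrsemiring) : commutative (@add G).
Proof. exact: addC. Qed.

Lemma nrsemiring_add0r (G : nrsemiring) : left_id (zero G) (@add G).
Proof. exact: add0r. Qed.

HB.instance Definition _ (G : nrsemiring) :=
  Monoid.isComLaw.Build (carrier G) (zero G) (@add G)
    (@nrsemiring_addA G) (@nrsemiring_addC G) (@nrsemiring_add0r G).

Section PairSums.
Variables (T : eqType) (idx : T) (op : Monoid.com_law idx).
Implicit Types (s t R U V : seq T) (x y : T).

Fixpoint pair_sums x s : nat :=
  if s is y :: s' then count (fun z => op y z == x) s' + pair_sums x s' else 0.

Definition cross_sums x s t : nat := \sum_(y <- s) count (fun z => op y z == x) t.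

Definition diag_sums x s : nat := count (fun y => op y y == x) s.

Lemma cross_sums_cons x y s t :
  cross_sums x (y :: s) t = count (fun z => op y z == x) t + cross_sums x s t.
Proof. by rewrite /cross_sums big_cons. Qed.

Lemma cross_sumsC x s t : cross_sums x s t = cross_sums x t s.
Proof.
elim: s => [|y s IH]; first by rewrite /cross_sums big_nil big1.
rewrite cross_sums_cons IH /cross_sums big_split /=; congr (_ + _).
rewrite -sum1_count big_mkcond /=; apply: eq_bigr => z _.
by rewrite Monoid.mulmC; case: (_ == _).
Qed.

Lemma cross_sums_perm x s1 s2 t1 t2 : perm_eq s1 s2 -> perm_eq t1 t2 ->
  cross_sums x s1 t1 = cross_sums x s2 t2.
Proof.
move=> eq_s eq_t; rewrite /cross_sums (perm_big _ eq_s).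
by apply: eq_bigr => y _; apply: seq.permP.
Qed.

Lemma pair_sums_double x s : (pair_sums x s).*2 + diag_sums x s = cross_sums x s s.
Proof.
elim: s => [|y s IH] /=; first by rewrite /cross_sums big_nil.
rewrite cross_sums_cons cross_sumsC cross_sums_cons -IH /diag_sums /= -!addnn.
lia.
Qed.

Lemma pair_sums_perm x s1 s2 : perm_eq s1 s2 -> pair_sums x s1 = pair_sums x s2.
Proof.
move=> eq_s; have := pair_sums_double x s1; have := pair_sums_double x s2.
rewrite (cross_sums_perm x eq_s eq_s) /diag_sums (seq.permP eq_s) -!addnn; lia.
Qed.

Lemma pair_sums_cat x s t :
  pair_sums x (s ++ t) = pair_sums x s + cross_sums x s t + pair_sums x t.
Proof.
elim: s => [|y s IH] /=; first by rewrite /cross_sums big_nil.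
rewrite count_cat IH cross_sums_cons; lia.
Qed.

Lemma perm_common_split s t : exists R U V,
  [/\ perm_eq s (R ++ U), perm_eq t (R ++ V) & forall x, x \in U -> x \notin V].
Proof.
elim: s t => [|y s IH] t; first by exists [::], [::], t.
case yt: (y \in t).
  have [R [U [V [eq_s eq_t disj]]]] := IH (rem y t).
  exists (y :: R), U, V; split => //; first by rewrite /= perm_cons.
  by rewrite (perm_trans (perm_to_rem yt)) //= perm_cons.
have [R [U [V [eq_s eq_t disj]]]] := IH t.
exists R, (y :: U), V; split => //.
  by rewrite perm_sym -[y :: U]cat1s perm_catCA /= perm_cons perm_sym.
move=> x; rewrite inE => /orP [/eqP -> | /disj //].
by apply/negP => yV; move: yt; rewrite (perm_mem eq_t) mem_cat yV orbT.
Qed.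

Lemma sum_count_uniq (A : eqType) (X : seq T) (f : A -> T) (L : seq A) : uniq X ->
  \sum_(x <- X) count (fun w => f w == x) L = count (fun w => f w \in X) L.
Proof.
move=> uX; elim: L => [|w L IH] /=; first by rewrite big1.
rewrite big_split /= IH; congr (_ + _).
rewrite -(count_uniq_mem (f w) uX) -sum1_count [RHS]big_mkcond /=.
by apply: eq_bigr => x _; rewrite eq_sym; case: (_ == _).
Qed.

Lemma sum_cross_sums_le (X : seq T) R V : uniq X ->
  \sum_(x <- X) cross_sums x R V <= size R * size V.
Proof.
move=> uX; rewrite /cross_sums exchange_big /=.
elim: R => [|y R IH] /=; first by rewrite big_nil.
by rewrite big_cons mulSn leq_add // sum_count_uniq // count_size.
Qed.

Lemma sum_pair_sums_le (X : seq T) V : uniq X ->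
  (\sum_(x <- X) pair_sums x V).*2 <= size V * (size V).-1.
Proof.
move=> uX; elim: V => [|y V IH] /=; first by rewrite big1.
rewrite big_split /= sum_count_uniq // doubleD.
have := count_size (fun z => op y z \in X) V.
case: (size V) IH => [|m] /=; rewrite ?muln0 => IH h; first by lia.
move: h IH; set c := count _ V; set S := \sum_(i <- X) _; nia.
Qed.

Lemma cross_sums1 x R v : cross_sums x R [:: v] = count (fun y => op y v == x) R.
Proof.
elim: R => [|y R IH]; first by rewrite /cross_sums big_nil.
by rewrite cross_sums_cons IH /= addn0.
Qed.

(* Contribution of the private part U of a list R ++ U to the weight of x. *)
Definition excess K x R U := K * count_mem x U + cross_sums x R U + pair_sums x U.

(* Summing the excess equations over the values of U: the K-weighted
   occurrences of U must be paid for by pair sums involving V. *)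
Lemma excess_sum_bound K R U V : size V = size U ->
  (forall x, x \in U -> x \notin V) ->
  (forall x, excess K x R U = excess K x R V) ->
  (K * size U).*2 <= (size R * size U).*2 + size U * (size U).-1.
Proof.
move=> sizeV disj eq_ex; pose X := undup U; have uX : uniq X := undup_uniq U.
have sum_ex : \sum_(x <- X) excess K x R U = \sum_(x <- X) excess K x R V.
  by apply: eq_bigr => x _; apply: eq_ex.
rewrite /excess !big_split /= -!big_distrr /= in sum_ex.
have cntU : \sum_(x <- X) count_mem x U = size U.
  rewrite (sum_count_uniq id U uX); apply/eqP; rewrite -all_count.
  by apply/allP => w wU /=; rewrite mem_undup.
have cntV : \sum_(x <- X) count_mem x V = 0.
  rewrite (sum_count_uniq id V uX); apply/eqP; rewrite -leqn0 leqNgt -has_count.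
  by apply/hasPn => w wV /=; rewrite mem_undup; apply/negP => /disj; rewrite wV.
have := sum_cross_sums_le R V uX; have := sum_pair_sums_le V uX.
move: sum_ex; rewrite cntU cntV sizeV.
set A := \sum_(x <- X) cross_sums x R U; set B := \sum_(x <- X) pair_sums x U.
set A' := \sum_(x <- X) cross_sums x R V; set B' := \sum_(x <- X) pair_sums x V.
lia.
Qed.

Lemma excess_arith n d : 4 <= n -> 0 < d <= n ->
  (n.-1 * n.-2) * d <= ((n - d) * d).*2 + d * d.-1 -> n = 4 /\ d = 1.
Proof.
move=> n4 /andP [d0 dn]; rewrite doubleMl [d * _]mulnC -mulnDl leq_pmul2r //.
have [m nE] : exists m, n = m + 4 by exists (n - 4); lia.
subst n.
rewrite addn4 /= in dn *.
have -> : m.+3 * m.+2 = m * m + 5 * m + 6 by rewrite !mulSn !mulnS; lia.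
have : m <= m * m by case: (m) => // k; rewrite leq_pmulr.
lia.
Qed.

Lemma excess_singleton R u v : size R = 3 -> u != v ->
  excess 3 u R [:: u] = excess 3 u R [:: v] -> all (fun r => op r v == u) R.
Proof.
move=> sizeR uv; rewrite /excess !cross_sums1 /= eqxx eq_sym (negbTE uv).
have := count_size (fun r => op r v == u) R; rewrite all_count sizeR.
set c := count _ R; set c' := count _ R => ??; apply/eqP; lia.
Qed.

Lemma excess_eq_extremal n K R U V : size R + size U = n -> size V = size U -> 4 <= n ->
  K.*2 = n.-1 * n.-2 -> (forall x, x \in U -> x \notin V) ->
  (forall x, excess K x R U = excess K x R V) ->
  U = [::] \/ exists u v, [/\ U = [:: u], V = [:: v], size R = 3
                             & all (fun r => op r v == u) R].
Proof.
move=> sizeRU sizeV n4 dK disj eq_ex.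
case: U sizeRU sizeV disj eq_ex => [|u U'] sizeRU sizeV disj eq_ex; [by left | right].
have [n_4 d_1] : n = 4 /\ size (u :: U') = 1.
  have := excess_sum_bound sizeV disj eq_ex.
  have -> : size R = n - size (u :: U') by lia.
  rewrite doubleMl dK; apply: excess_arith => //.
  by rewrite -sizeRU leq_addl.
case: U' sizeRU sizeV disj eq_ex d_1 => // sizeRU + disj eq_ex _.
case: V disj eq_ex => [|v [|??]] // disj eq_ex _.
have uv : u != v by have := disj u; rewrite !inE eqxx => /(_ isT).
have K3 : K = 3 by move: dK; rewrite n_4 /=; lia.
have sizeR : size R = 3 by move: sizeRU => /=; lia.
exists u, v; split => //; subst K; exact: excess_singleton (eq_ex u).
Qed.

Definition weight K x s := K * count_mem x s + pair_sums x s.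

Lemma weight_perm K x s t : perm_eq s t -> weight K x s = weight K x t.
Proof. by move=> eq_st; rewrite /weight (seq.permP eq_st) (pair_sums_perm x eq_st). Qed.

Lemma weight_cat K x R U : weight K x (R ++ U) = weight K x R + excess K x R U.
Proof. by rewrite /weight /excess count_cat pair_sums_cat mulnDr; lia. Qed.

(* The extremal configuration is incompatible with equal total sums:
   r + v = u and r + u = v for three r's make the sum of R ++ [:: u] equal v. *)
Lemma extremal_sum R u v : size R = 3 ->
  all (fun r => op r v == u) R -> all (fun r => op r u == v) R ->
  \big[op/idx]_(y <- R ++ [:: u]) y = v.
Proof.
case: R => [|r1 [|r2 [|r3 [|??]]]] //= _ /and4P [/eqP e1 /eqP e2 /eqP e3 _].
move=> /and4P [/eqP f1 /eqP f2 /eqP f3 _].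
by rewrite !big_cons big_nil Monoid.mulm1 f3 e2 f1.
Qed.

Lemma weights_perm n K s t : size s = n -> size t = n -> 4 <= n ->
  K.*2 = n.-1 * n.-2 -> (forall x, weight K x s = weight K x t) ->
  \big[op/idx]_(y <- s) y = \big[op/idx]_(y <- t) y -> perm_eq s t.
Proof.
move=> sizes sizet n4 dK eq_w eq_sum.
have [R [U [V [eq_s eq_t disj]]]] := perm_common_split s t.
have eq_ex x : excess K x R U = excess K x R V.
  by have := eq_w x; rewrite (weight_perm _ _ eq_s) (weight_perm _ _ eq_t) !weight_cat; lia.
have sizeRU : size R + size U = n by rewrite -size_cat -(perm_size eq_s).
have sizeRV : size R + size V = n by rewrite -size_cat -(perm_size eq_t).
have sizeV : size V = size U by lia.
have disj' x : x \in V -> x \notin U by apply: contraTN => /disj.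
have [U0|[u [v [EU EV sizeR hR]]]] := excess_eq_extremal sizeRU sizeV n4 dK disj eq_ex.
  move: sizeV eq_s eq_t; rewrite U0 => /size0nil -> eq_s eq_t.
  by apply: (perm_trans eq_s); rewrite perm_sym.
have [V0|[v' [u' [EV' EU' _ hR']]]] :=
  excess_eq_extremal sizeRV (esym sizeV) n4 dK disj' (fun x => esym (eq_ex x)).
  by rewrite V0 in EV.
move: EV' EU' hR'; rewrite EU EV => -[<-] [<-] hR'.
move: eq_sum; rewrite (perm_big _ eq_s) (perm_big _ eq_t) EU EV.
rewrite (extremal_sum sizeR hR hR') (extremal_sum sizeR hR' hR) => vu.
by have := disj u; rewrite EU EV !inE eqxx vu eqxx => /(_ isT).
Qed.

End PairSums.

Section PairIndexSums.
Variable n : nat.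
Implicit Types F : 'I_n -> 'I_n -> nat.

Lemma sum_pairs F :
  \sum_(I : pair_t n) F (sval I).1 (sval I).2 = \sum_(i < n) \sum_(j < n | i < j) F i j.
Proof.
rewrite -(big_sub (fun p : 'I_n * 'I_n => p.1 < p.2) (fun p => F p.1 p.2)).
by rewrite pair_big_dep.
Qed.

Lemma sum_row F i :
  \sum_(j < n) F i j = \sum_(j < n | i < j) F i j + \sum_(j < n | j < i) F i j + F i i.
Proof.
rewrite (bigD1 i) //= [RHS]addnC; congr (_ + _).
rewrite [LHS](bigID (fun j : 'I_n => i < j)) /=; congr (_ + _); apply: eq_bigl => j.
  by rewrite andb_idl // => ij; apply: contraTneq ij => ->; rewrite ltnn.
by rewrite -leqNgt ltn_neqAle.
Qed.

Lemma sum_pairs_sym F : (forall i j, F i j = F j i) ->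
  (\sum_(I : pair_t n) F (sval I).1 (sval I).2).*2 + \sum_(i < n) F i i =
  \sum_(i < n) \sum_(j < n) F i j.
Proof.
move=> FC; rewrite (eq_bigr _ (fun i _ => sum_row F i)) !big_split /= sum_pairs.
congr (_ + _); rewrite -addnn; congr (_ + _).
rewrite (exchange_big_dep xpredT) //=.
by apply: eq_bigr => i _; apply: eq_bigr => j _; rewrite FC.
Qed.

Lemma card_pairs : #|{: pair_t n}|.*2 + n = n * n.
Proof.
have := @sum_pairs_sym (fun _ _ => 1) (fun _ _ => erefl).
rewrite sum1_card !big_const_ord !iter_addn_0 mul1n.
by change #|xpredT| with #|{: pair_t n}|.
Qed.

(* Needed to subtract n - 1 from the number of pairs without truncation. *)
Lemma card_pairs_ge : n.-1 <= #|{: pair_t n}|.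
Proof. by have := card_pairs; move: #|_| => P; case: n => [|[|m]] //=; nia. Qed.

Lemma card_pairs_excess : (#|{: pair_t n}| - n.-1).*2 = n.-1 * n.-2.
Proof. by have := card_pairs; move: #|_| => P; case: n => [|[|m]] //=; nia. Qed.

End PairIndexSums.

Section AffineFunctions.
Variable G : nrsemiring.

Local Notation addL := (Monoid.ComLaw.clone _ _ (@add G) _).

Definition coefs n (a : 'I_n -> G) : seq G := map a (enum 'I_n).

Lemma count_coefs n (a : 'I_n -> G) (P : pred G) :
  count P (coefs a) = \sum_(k < n) P (a k).
Proof.
rewrite count_map -sum1_count big_enum_cond /= big_mkcond /=.
by apply: eq_bigr => k _; rewrite /preim /=; case: (P _).
Qed.

Lemma sum_coefs n (a : 'I_n -> G) :
  \big[@add G/zero G]_(y <- coefs a) y = \big[@add G/zero G]_(k < n) a k.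
Proof. by rewrite big_map big_enum. Qed.

Definition affine_rep n (f : Fn G n) (a : 'I_n -> G) (c : G) : Prop :=
  forall x, f x = add (\big[@add G/zero G]_(i < n) Defs.mul (a i) (x i)) c.

Lemma affine_rep_at0 n (a : 'I_n -> G) :
  \big[@add G/zero G]_(i < n) Defs.mul (a i) (zero G) = zero G.
Proof. by rewrite big1 // => i _; rewrite mulr0. Qed.

Lemma affine_rep_at_unit n (a : 'I_n -> G) (i : 'I_n) :
  \big[@add G/zero G]_(k < n) Defs.mul (a k) (if k == i then Defs.one G else zero G) = a i.
Proof.
rewrite (bigD1 i) //= eqxx mulr1 big1 ?Monoid.mulm1 // => k /negbTE ->.
exact: mulr0.
Qed.

Lemma affine_rep_unique n (f : Fn G n) a c a' c' :
  affine_rep f a c -> affine_rep f a' c' -> (cancellative G \/ c = zero G) ->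
  c = c' /\ a =1 a'.
Proof.
move=> rep rep' hc.
have cc' : c = c' by have := rep (fun _ => zero G); rewrite rep' !affine_rep_at0 !add0r.
split=> // i; have := rep (fun k => if k == i then Defs.one G else zero G).
rewrite rep' !affine_rep_at_unit -cc'; case: hc => [canc | ->]; last by rewrite !Monoid.mulm1.
by rewrite !(addC _ c) => /esym /canc.
Qed.

Lemma perm_coefsP n (a b : 'I_n -> G) :
  perm_eq (coefs a) (coefs b) -> exists p : 'S_n, forall i, a i = b (p i).
Proof.
move=> /(@tuple_permP _ _ _ [tuple b i | i < n]) [p ab]; exists p => i.
have := congr1 (fun s => nth (a i) s i) ab.
rewrite /= !(nth_map i) -?enumT ?size_enum_ord // nth_ord_enum.
by rewrite tnth_map tnth_ord_tuple.
Qed.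

Lemma perm_enum_perm n (p : 'S_n) : perm_eq (map p (enum 'I_n)) (enum 'I_n).
Proof.
apply: uniq_perm; rewrite ?enum_uniq ?(map_inj_uniq (@perm_inj _ p)) ?enum_uniq //.
move=> k; rewrite mem_enum; apply/mapP.
by exists (p^-1 k)%g; rewrite ?mem_enum ?permKV.
Qed.

Lemma coefs_comp_perm n (a b : 'I_n -> G) (p : 'S_n) :
  (forall i, a i = b (p i)) -> perm_eq (coefs a) (coefs b).
Proof. by move=> ab; rewrite /coefs (eq_map ab) (map_comp b) perm_map // perm_enum_perm. Qed.

Lemma fequiv_of_perm_coefs n (f g : Fn G n) a b c :
  affine_rep f a c -> affine_rep g b c -> perm_eq (coefs a) (coefs b) -> fequiv f g.
Proof.
move=> repf repg /perm_coefsP [p ab]; exists p^-1%g => x.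
rewrite repf repg; congr (add _ c).
rewrite [in RHS](reindex_inj (@perm_inj _ p)) /=.
by apply: eq_bigr => i _; rewrite ab permK.
Qed.

Lemma perm_coefs_of_fequiv n (f g : Fn G n) a b c c' :
  affine_rep f a c -> affine_rep g b c' -> (cancellative G \/ c = zero G) ->
  fequiv f g -> c = c' /\ perm_eq (coefs a) (coefs b).
Proof.
move=> repf repg hc [s fg].
have repf' : affine_rep f (fun i => b (s^-1%g i)) c'.
  move=> x; rewrite fg repg; congr (add _ c').
  rewrite (reindex_inj (@perm_inj _ s^-1%g)) /=.
  by apply: eq_bigr => i _; rewrite permKV.
have [-> ab] := affine_rep_unique repf repf' hc; split => //.
exact: coefs_comp_perm.
Qed.

Lemma at_nat_ord m (x : 'I_m -> G) (k : 'I_m) : at_nat x k = x k.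
Proof. by rewrite /at_nat; case: insubP => [k' _ /val_inj -> |]; rewrite ?ltn_ord. Qed.

Lemma pair_fst_lt n (I : pair_t n) : (sval I).1 < n.-1.
Proof. by case: I => [[i j] /= ij]; have := ltn_ord j; lia. Qed.

Definition pair_fst n (I : pair_t n) : 'I_n.-1 := Ordinal (pair_fst_lt I).

Lemma lift_pair_fst n (I : pair_t n) : lift (sval I).2 (pair_fst I) = (sval I).1.
Proof. by apply: val_inj; rewrite /= /bump leqNgt (valP I). Qed.

(* Coefficients of f_I: drop a_j (variables shift past j) and add it onto a_i. *)
Definition minor_coef n (a : 'I_n -> G) (I : pair_t n) (m : 'I_n.-1) : G :=
  if m == pair_fst I then add (a (lift (sval I).2 m)) (a (sval I).2)
  else a (lift (sval I).2 m).

Lemma minor_affine_rep n (f : Fn G n) a c (I : pair_t n) :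
  affine_rep f a c -> affine_rep (minor f I) (minor_coef a I) c.
Proof.
move=> rep x; rewrite /minor rep; congr (add _ c).
set i := (val I).1; set j := (val I).2.
rewrite (bigD1_ord j) //= ltnn eqxx.
have -> : at_nat x i = x (pair_fst I) by rewrite -at_nat_ord.
have x_lift (m : 'I_n.-1) : at_nat x (if bump j m < j then bump j m
     else if bump j m == j then (i : nat) else (bump j m).-1) = x m.
  rewrite /bump; case: (leqP j m) => jm /=; last by rewrite jm at_nat_ord.
  have -> : (1 + m < j) = false by apply/negbTE; rewrite -leqNgt; lia.
  have -> : (1 + m == j) = false by apply/negbTE/eqP; lia.
  by rewrite at_nat_ord.
rewrite (eq_bigr (fun m => Defs.mul (a (lift j m)) (x m))); last by move=> m _; rewrite x_lift.
rewrite [in RHS](bigD1 (pair_fst I)) //= /minor_coef eqxx [in LHS](bigD1 (pair_fst I)) //=.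
rewrite mulDl [in RHS](eq_bigr (fun m => Defs.mul (a (lift j m)) (x m))) => [|m /negbTE -> //].
by rewrite !addA (addC (Defs.mul (a j) _)).
Qed.

Lemma minor_coef_count n (a : 'I_n -> G) (I : pair_t n) x :
  count_mem x (coefs (minor_coef a I)) + (a (sval I).1 == x) + (a (sval I).2 == x) =
  (add (a (sval I).1) (a (sval I).2) == x) + count_mem x (coefs a).
Proof.
rewrite !count_coefs (bigD1 (pair_fst I)) //= {1}/minor_coef eqxx lift_pair_fst.
rewrite (bigD1_ord (sval I).2) //= [in RHS](bigD1 (pair_fst I)) //= lift_pair_fst.
rewrite [in LHS](eq_bigr (fun m => (a (lift (sval I).2 m) == x) : nat)) => [|m /negbTE mI].
  by move: (\sum_(_ < _ | _) _) => S; lia.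
by rewrite /minor_coef mI.
Qed.

Lemma minor_coef_sum n (a : 'I_n -> G) (I : pair_t n) :
  \big[@add G/zero G]_(m < n.-1) minor_coef a I m = \big[@add G/zero G]_(k < n) a k.
Proof.
rewrite (bigD1 (pair_fst I)) //= {1}/minor_coef eqxx lift_pair_fst.
rewrite [RHS](bigD1_ord (sval I).2) //= [in RHS](bigD1 (pair_fst I)) //= lift_pair_fst.
rewrite [in LHS](eq_bigr (fun m => a (lift (sval I).2 m))) => [|m /negbTE mI].
  by rewrite addA (addC (a (sval I).2)).
by rewrite /minor_coef mI.
Qed.

(* Each index k lies in n - 1 pairs. *)
Lemma pairs_count_ends n (a : 'I_n -> G) x :
  \sum_(I : pair_t n) ((a (sval I).1 == x) + (a (sval I).2 == x)) =
  n.-1 * count_mem x (coefs a).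
Proof.
rewrite count_coefs /=; set m := \sum_(k < n) ((a k == x) : nat).
have := @sum_pairs_sym n (fun i j => (a i == x) + (a j == x)) (fun i j => addnC _ _).
have -> : \sum_(i < n) \sum_(j < n) ((a i == x) + (a j == x)) = (n * m).*2.
  rewrite (eq_bigr (fun i => n * (a i == x) + m)) => [|i _]; last first.
    by rewrite big_split /= sum_nat_const card_ord.
  by rewrite big_split /= -big_distrr sum_nat_const card_ord -addnn.
have -> : \sum_(i < n) ((a i == x) + (a i == x)) = m + m by rewrite big_split.
rewrite -subn1 mulnBl mul1n; move: (\sum_(I : pair_t n) _) => S; lia.
Qed.

Lemma pairs_count_sums n (a : 'I_n -> G) x :
  \sum_(I : pair_t n) (add (a (sval I).1) (a (sval I).2) == x) = pair_sums addL x (coefs a).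
Proof.
have symF i j : (add (a i) (a j) == x) = (add (a j) (a i) == x) by rewrite addC.
have := @sum_pairs_sym n (fun i j => add (a i) (a j) == x) (fun i j => congr1 _ (symF i j)).
have -> : \sum_(i < n) ((add (a i) (a i) == x) : nat) = diag_sums addL x (coefs a).
  by rewrite /diag_sums count_coefs.
have -> : \sum_(i < n) \sum_(j < n) ((add (a i) (a j) == x) : nat) =
          cross_sums addL x (coefs a) (coefs a).
  by rewrite /cross_sums big_map big_enum /=; apply: eq_bigr => i _; rewrite count_coefs.
by rewrite -pair_sums_double => /addIn /double_inj.
Qed.

Lemma deck_weight n (a : 'I_n -> G) x :
  weight addL (#|{: pair_t n}| - n.-1) x (coefs a) =
  \sum_(I : pair_t n) count_mem x (coefs (minor_coef a I)).
Proof.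
have : \sum_(I : pair_t n) count_mem x (coefs (minor_coef a I)) +
        \sum_(I : pair_t n) ((a (sval I).1 == x) + (a (sval I).2 == x)) =
        \sum_(I : pair_t n) (add (a (sval I).1) (a (sval I).2) == x) +
        \sum_(I : pair_t n) count_mem x (coefs a).
  rewrite -big_split -[in RHS]big_split; apply: eq_bigr => I _.
  by rewrite /= addnA minor_coef_count.
rewrite pairs_count_ends pairs_count_sums sum_nat_const /weight mulnBl.
change #|xpredT| with #|{: pair_t n}|.
have := leq_mul (card_pairs_ge n) (leqnn (count_mem x (coefs a))).
move: (count_mem x _) (\sum_(I : pair_t n) _) => m S; lia.
Qed.

Lemma deck_perm_coefs n (a b : 'I_n -> G) : 4 <= n ->
  (forall x, \sum_(I : pair_t n) count_mem x (coefs (minor_coef a I)) =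
             \sum_(I : pair_t n) count_mem x (coefs (minor_coef b I))) ->
  \big[@add G/zero G]_(k < n) a k = \big[@add G/zero G]_(k < n) b k ->
  perm_eq (coefs a) (coefs b).
Proof.
move=> n4 eq_deck eq_sum.
apply: (@weights_perm _ _ addL n _ _ _ _ _ n4 (card_pairs_excess n)).
- by rewrite size_map size_enum_ord.
- by rewrite size_map size_enum_ord.
- by move=> x; rewrite !deck_weight.
- by rewrite !sum_coefs.
Qed.

Definition pair_image n (p : 'S_n) (I : pair_t n) : pair_t n :=
  let u := p (sval I).1 in let w := p (sval I).2 in
  odflt I (insub (if u < w then (u, w) else (w, u))).

Lemma pair_imageE n (p : 'S_n) (I : pair_t n) :
  let u := p (sval I).1 in let w := p (sval I).2 in
  sval (pair_image p I) = if u < w then (u, w) else (w, u).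
Proof.
have uw : p (sval I).1 != p (sval I).2.
  rewrite (inj_eq (@perm_inj _ p)); case: I => [[i j] /= ij].
  by apply: contraTneq ij => ->; rewrite ltnn.
move=> u w; rewrite /pair_image -/u -/w.
case: insubP => [J _ -> //| /=].
move: uw; rewrite -/u -/w; case: (ltngtP u w) => [h|h|h] /=; rewrite ?h //.
by move=> /negP []; apply/eqP/val_inj.
Qed.

Lemma pair_image_inj n (p : 'S_n) : injective (pair_image p).
Proof.
move=> [[i j] ij] [[i' j'] ij'] /(congr1 sval); rewrite !pair_imageE /= => e.
apply: val_inj => /=; move: e ij ij'.
by case: ifP => _; case: ifP => _ [] /perm_inj -> /perm_inj -> //= /ltn_trans h /h; rewrite ltnn.
Qed.

Lemma minor_coefs_perm n (a b : 'I_n -> G) (p : 'S_n) (I : pair_t n) :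
  (forall i, a i = b (p i)) ->
  perm_eq (coefs (minor_coef a I)) (coefs (minor_coef b (pair_image p I))).
Proof.
move=> ab; have eq_coefs := coefs_comp_perm ab.
apply/allP => x _; apply/eqP.
have := minor_coef_count a I x; have := minor_coef_count b (pair_image p I) x.
rewrite pair_imageE !ab (seq.permP eq_coefs); case: ifP => _ /=.
  by move: (count_mem x _) (count_mem x _) => c1 c2; lia.
rewrite (addC (b (p (sval I).2))).
by move: (count_mem x _) (count_mem x _) => c1 c2; lia.
Qed.

Lemma unique_affine_rep n (f : Fn G n) : affine f -> (linear f \/ cancellative G) ->
  exists a c, affine_rep f a c /\ (cancellative G \/ c = zero G).
Proof.
move=> [a [c rep]] [[a' rep'] | canc]; first by exists a', (zero G); split; last right.
by exists a, c; split; last left.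
Qed.

Lemma affine_deck_eq_iff n (f g : Fn G n) : 4 <= n -> affine f -> affine g ->
  ((linear f /\ linear g) \/ cancellative G) -> (deck_eq f g <-> fequiv f g).
Proof.
move=> n4 aff_f aff_g hyp.
have hyp_f : linear f \/ cancellative G by case: hyp => [[]|]; [left | right].
have hyp_g : linear g \/ cancellative G by case: hyp => [[]|]; [left | right].
have [a [c [repf uf]]] := unique_affine_rep aff_f hyp_f.
have [b [c' [repg _]]] := unique_affine_rep aff_g hyp_g.
have I0 : pair_t n by exists (Ordinal (ltnW (ltnW n4)), Ordinal (ltnW n4)).
split.
- move=> [pi deck_fg].
  have minor_eq I := perm_coefs_of_fequiv (minor_affine_rep I repf)
                       (minor_affine_rep (pi I) repg) uf (deck_fg I).
  have [cc' _] := minor_eq I0; subst c'; apply: (fequiv_of_perm_coefs repf repg).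
  apply: deck_perm_coefs => [//||].
    move=> x; rewrite [RHS](reindex_inj (@perm_inj _ pi)) /=.
    by apply: eq_bigr => I _; case: (minor_eq I) => _ /seq.permP ->.
  rewrite -(minor_coef_sum a I0) -(minor_coef_sum b (pi I0)) -!sum_coefs.
  by case: (minor_eq I0) => _ /(perm_big _) ->.
- move=> fg; have [cc' /perm_coefsP [p ab]] := perm_coefs_of_fequiv repf repg uf fg.
  subst c'.
  exists (perm (@pair_image_inj n p)) => I; rewrite permE.
  apply: (fequiv_of_perm_coefs (minor_affine_rep I repf) (minor_affine_rep _ repg)).
  exact: minor_coefs_perm.
Qed.

End AffineFunctions.

Theorem mainTheorem12 (G : nrsemiring) :
  (forall (n : nat) (f g : Fn G n),
     4 <= n -> affine f -> affine g ->
     ((linear f /\ linear g) \/ cancellative G) ->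
     (deck_eq f g <-> fequiv f g))
  /\ weakly_reconstructible (@linear_class_ge4 G)
  /\ (cancellative G -> weakly_reconstructible (@affine_class_ge4 G)).
Proof.
have linear_affine n (f : Fn G n) : linear f -> affine f.
  by move=> [a rep]; exists a, (zero G).
split; first exact: affine_deck_eq_iff.
split.
  move=> n f g [n4 lin_f] [_ lin_g] deck_gf.
  have [aff_f aff_g] := (linear_affine _ _ lin_f, linear_affine _ _ lin_g).
  by apply/(affine_deck_eq_iff n4 aff_g aff_f); first by left.
move=> canc n f g [n4 aff_f] [_ aff_g] deck_gf.
by apply/(affine_deck_eq_iff n4 aff_g aff_f); first by right.
Qed.
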